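(* Let $n>24$, $0<\epsilon<\frac13$, and let $m$ be a positive integer with load factor $L=\frac mn>\epsilon^{-2}$. Then $$\mathsf P\left\{\left|\sum_{i=1}^n \frac{k_i(x)(k_i(x)-1)}{m(m-1)}\cdot\frac{1}{\|p\|^2}-1\right|\le 22\,\epsilon\right\}\ \ge\ 1-\frac{10}{9}e^{-L\epsilon^2}.$$
   Context: Standing setup: $U$ is a finite set (the key space) with a probability measure $q$; $T=\{1,\dots,n\}$; $h:U\to T$ is an arbitrary function. $p_i=\sum_{u\in h^{-1}(i)}q(u)$ and $\|p\|^2=\sum_{i=1}^n p_i^2$. $U^m$ carries the product measure $q^m$, and $\mathsf P$ denotes probability under $q^m$ of the event for $x=(x_1,\dots,x_m)\in U^m$. $k_i(x)=|\{j: h(x_j)=i\}|$. *)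

From HB Require Import structures.
From mathcomp Require Import all_boot all_order all_algebra.
From mathcomp Require Import reals.
From mathcomp Require Import sequences exp.
Set Implicit Arguments. Unset Strict Implicit. Unset Printing Implicit Defensive.
Import Order.TTheory GRing.Theory Num.Theory.
Local Open Scope ring_scope.

Definition pmass (R : realType) (U : finType) (n : nat) (q : U -> R)
  (h : U -> 'I_n) (i : 'I_n) : R := \sum_(u : U | h u == i) q u.

Definition normp2 (R : realType) (U : finType) (n : nat) (q : U -> R)
  (h : U -> 'I_n) : R := \sum_(i < n) (pmass q h i) ^+ 2.

Definition kcount (U : finType) (n m : nat) (h : U -> 'I_n)
  (x : {ffun 'I_m -> U}) (i : 'I_n) : nat := #|[set j : 'I_m | h (x j) == i]|.

Definition Prob (R : realType) (U : finType) (q : U -> R) (m : nat)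
  (E : pred {ffun 'I_m -> U}) : R :=
  \sum_(x : {ffun 'I_m -> U} | E x) \prod_(j < m) q (x j).

From HB Require Import structures.
From mathcomp Require Import all_boot all_order all_algebra.
From mathcomp Require Import reals.
From mathcomp Require Import sequences exp.
From mathcomp Require Import fingroup perm.
From mathcomp Require Import ring lra zify.
Set Implicit Arguments. Unset Strict Implicit. Unset Printing Implicit Defensive.
Import Order.TTheory GRing.Theory Num.Theory.
Local Open Scope ring_scope.

(* The normalised number of colliding pairs is a U-statistic of order 2 in
   x_1, ..., x_m with mean ||p||^2.  Hoeffding's averaging trick writes it as
   the average, over all permutations of the m coordinates, of a mean of
   floor(m/2) collision indicators on disjoint pairs of coordinates; these are
   independent, so by Jensen its moment generating function at mu * floor(m/2)
   is at most (1 + (e^mu - 1) ||p||^2)^(floor(m/2)).  A two-sided Chernoff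
   bound with mu = 11 eps / 8 then bounds the failure probability by
   2 exp (-(847/32) eps^2 floor(m/2) ||p||^2).  Since 1 <= n ||p||^2 and
   n < eps^2 m, this is at most 2 exp (-L eps^2 - 1) <= exp (-L eps^2). *)

Section Expectation.
Variables (R : realType) (U : finType) (q : U -> R) (N : nat).
Hypotheses (q_ge0 : forall u, 0 <= q u) (q_sum1 : \sum_(u : U) q u = 1).
Local Notation X := {ffun 'I_N -> U}.

Definition weight (x : X) : R := \prod_(j < N) q (x j).
Definition expect (F : X -> R) : R := \sum_(x : X) weight x * F x.

Lemma weight_ge0 x : 0 <= weight x.
Proof. by apply: prodr_ge0 => j _. Qed.

Lemma expect_prod (f : 'I_N -> U -> R) :
  expect (fun x => \prod_(j < N) f j (x j)) = \prod_(j < N) \sum_(u : U) q u * f j u.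
Proof.
rewrite bigA_distr_bigA /expect; apply: eq_bigr => x _.
by rewrite /weight -big_split.
Qed.

Lemma expect1 : expect (fun=> 1) = 1.
Proof.
have := expect_prod (fun _ _ => 1); under [RHS]eq_bigr do under eq_bigr do rewrite mulr1.
by rewrite prodr_const q_sum1 expr1n big1 // => j _; rewrite prodr_const expr1n.
Qed.

Lemma sum_weight : \sum_(x : X) weight x = 1.
Proof. by rewrite -expect1 /expect; under [RHS]eq_bigr do rewrite mulr1. Qed.

Lemma eq_expect F G : (forall x, F x = G x) -> expect F = expect G.
Proof. by move=> FG; apply: eq_bigr => x _; rewrite FG. Qed.

Lemma expectD F G : expect (fun x => F x + G x) = expect F + expect G.
Proof. by rewrite /expect -big_split; apply: eq_bigr => x _; rewrite mulrDr. Qed.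

Lemma expectMl c F : expect (fun x => c * F x) = c * expect F.
Proof. by rewrite /expect mulr_sumr; apply: eq_bigr => x _; rewrite mulrCA. Qed.

Lemma expect_sum (I : finType) (f : I -> X -> R) :
  expect (fun x => \sum_(t : I) f t x) = \sum_(t : I) expect (f t).
Proof. by rewrite /expect; under eq_bigr do rewrite mulr_sumr; rewrite exchange_big. Qed.

Lemma ler_expect F G : (forall x, F x <= G x) -> expect F <= expect G.
Proof. by move=> FG; apply: ler_sum => x _; apply: ler_wpM2l; [exact: weight_ge0|]. Qed.

Lemma expect_marginal i (phi : U -> R) :
  expect (fun x => phi (x i)) = \sum_(u : U) q u * phi u.
Proof.
have others : \prod_(j < N | j != i) \sum_(u : U) q u * (if j == i then phi u else 1) = 1.
  by apply: big1 => j /negbTE ->; under eq_bigr do rewrite mulr1.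
have := expect_prod (fun j u => if j == i then phi u else 1).
rewrite (bigD1 i) //= eqxx others mulr1 => <-; apply: eq_expect => x.
by rewrite (bigD1 i) //= eqxx big1 ?mulr1 // => j /negbTE ->.
Qed.

Definition merge (A : {set 'I_N}) (x y : X) : X :=
  [ffun i => if i \in A then x i else y i].

(* Swapping the coordinates outside A between two independent samples
   preserves the product weight. *)
Lemma expect_indep (A : {set 'I_N}) (F G : X -> R) :
  (forall x y : X, (forall i, i \in A -> x i = y i) -> F x = F y) ->
  (forall x y : X, (forall i, i \notin A -> x i = y i) -> G x = G y) ->
  expect (fun x => F x * G x) = expect F * expect G.
Proof.
move=> HF HG.
pose swap (p : X * X) := (merge A p.1 p.2, merge A p.2 p.1).
have swapK : involutive swap.
  by case=> x y; congr (_, _); apply/ffunP => i; rewrite !ffunE; case: (i \in A).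
have -> : expect F * expect G =
    \sum_(p : X * X) weight p.1 * weight p.2 * (F p.1 * G p.2).
  rewrite /expect mulr_suml; under eq_bigr do rewrite mulr_sumr.
  by rewrite pair_big /=; apply: eq_bigr => [[x y]] _ /=; ring.
rewrite (reindex_inj (can_inj swapK)) /=.
transitivity (\sum_(p : X * X) weight p.1 * weight p.2 * (F p.1 * G p.1)).
  rewrite -(pair_big xpredT xpredT (fun x y : X => weight x * weight y * (F x * G x))) /expect.
  apply: eq_bigr => x _.
  by rewrite -[LHS]mulr1 -sum_weight !mulr_sumr; apply: eq_bigr => y _; ring.
apply: eq_bigr => [[x y]] _ /=.
rewrite (HF (merge A x y) x); last by move=> i iA; rewrite ffunE iA.
rewrite (HG (merge A y x) x); last by move=> i iA; rewrite ffunE (negbTE iA).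
congr (_ * _); rewrite /weight -!big_split /=; apply: eq_bigr => j _.
by rewrite !ffunE; case: (j \in A) => //; ring.
Qed.

Lemma expect_perm (s : {perm 'I_N}) G :
  expect (fun x => G [ffun j => x (s j)]) = expect G.
Proof.
have shuffle_inj : injective (fun x : X => [ffun j => x (s j)]).
  move=> x y /ffunP e; apply/ffunP => j.
  by have := e ((s^-1)%g j); rewrite !ffunE permKV.
rewrite /expect [RHS](reindex_inj shuffle_inj); apply: eq_bigr => x _; congr (_ * _).
rewrite /weight [LHS](reindex_inj (@perm_inj _ s)) /=.
by apply: eq_bigr => j _; rewrite ffunE.
Qed.

Lemma Prob_markov (E : pred X) F : (forall x, 0 <= F x) ->
  (forall x, ~~ E x -> 1 <= F x) -> 1 - expect F <= Prob q E.
Proof.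
move=> F_ge0 F_ge1; change (1 - expect F <= \sum_(x | E x) weight x).
have : \sum_(x | ~~ E x) weight x <= expect F.
  apply: (@le_trans _ _ (\sum_(x | ~~ E x) weight x * F x)).
    apply: ler_sum => x nEx; rewrite -{1}[weight x]mulr1.
    by apply: ler_wpM2l; [exact: weight_ge0 | exact: F_ge1].
  rewrite /expect [X in _ <= X](bigID (fun x => ~~ E x)) /= lerDl.
  by apply: sumr_ge0 => x _; apply: mulr_ge0; [exact: weight_ge0 | exact: F_ge0].
have := sum_weight; rewrite (bigID E) /=; lra.
Qed.

End Expectation.

Section HashLoad.
Variables (R : realType) (U : finType) (q : U -> R) (n : nat) (h : U -> 'I_n).
Hypotheses (q_ge0 : forall u, 0 <= q u) (q_sum1 : \sum_(u : U) q u = 1).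

Lemma pmassE t : pmass q h t = \sum_(u : U) q u * (h u == t)%:R.
Proof.
rewrite /pmass big_mkcond /=; apply: eq_bigr => u _.
by case: (h u == t); rewrite ?mulr1 ?mulr0.
Qed.

Lemma pmass_ge0 t : 0 <= pmass q h t.
Proof. by apply: sumr_ge0 => u _; exact: q_ge0. Qed.

Lemma sum_pmass : \sum_(t < n) pmass q h t = 1.
Proof.
under eq_bigr do rewrite pmassE.
rewrite exchange_big /= -[RHS]q_sum1; apply: eq_bigr => u _.
rewrite (bigD1 (h u)) //= eqxx mulr1 big1 ?addr0 // => t /negbTE.
by rewrite eq_sym => ->; rewrite mulr0.
Qed.

Lemma normp2_ge0 : 0 <= normp2 q h.
Proof. by apply: sumr_ge0 => t _; exact: sqr_ge0. Qed.

Lemma normp2_le1 : normp2 q h <= 1.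
Proof.
rewrite /normp2 -sum_pmass; apply: ler_sum => t _.
have p_le1 : pmass q h t <= 1.
  rewrite -sum_pmass (bigD1 t) //= lerDl.
  by apply: sumr_ge0 => ? _; exact: pmass_ge0.
by rewrite expr2 ler_piMr ?pmass_ge0.
Qed.

(* Cauchy-Schwarz, in the form 0 <= sum_t (n p_t - 1)^2 = n (n ||p||^2 - 1). *)
Lemma normp2_ge_inv : (0 < n)%N -> 1 <= n%:R * normp2 q h.
Proof.
move=> n_gt0.
have : 0 <= \sum_(t < n) (n%:R * pmass q h t - 1) ^+ 2.
  by apply: sumr_ge0 => t _; exact: sqr_ge0.
have sqrE t : (n%:R * pmass q h t - 1) ^+ 2 =
    n%:R ^+ 2 * pmass q h t ^+ 2 - 2 * n%:R * pmass q h t + 1 :> R by ring.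
rewrite (eq_bigr _ (fun t _ => sqrE t)) big_split sumrB /= -!mulr_sumr.
rewrite sum_pmass sumr_const card_ord -/(normp2 q h) -mulr_natl mulr1.
have n_gt0' : 0 < n%:R :> R by rewrite ltr0n.
nra.
Qed.

Lemma normp2_gt0 : (0 < n)%N -> 0 < normp2 q h.
Proof.
move=> n_gt0; rewrite lt0r normp2_ge0 andbT.
by apply: contraTneq (normp2_ge_inv n_gt0) => ->; rewrite mulr0 ler10.
Qed.

End HashLoad.

Lemma expR_mean_le (R : realType) (I : finType) (y : I -> R) : (0 < #|I|)%N ->
  expR (#|I|%:R^-1 * \sum_i y i) <= #|I|%:R^-1 * \sum_i expR (y i).
Proof.
move=> I_gt0; set c : R := #|I|%:R; set mean := c^-1 * \sum_i y i.
have c_gt0 : 0 < c by rewrite /c ltr0n.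
have tangent i : expR mean * (1 + (y i - mean)) <= expR (y i).
  rewrite -[X in _ <= expR X](subrKC mean) expRD.
  by apply: ler_wpM2l; [exact: expR_ge0 | exact: expR_ge1Dx].
have := @ler_sum _ I (index_enum I) xpredT _ _ (fun i _ => tangent i).
have -> : \sum_i expR mean * (1 + (y i - mean)) = expR mean * c.
  rewrite -mulr_sumr big_split /= sumrB !sumr_const -mulr_natl -/c /mean.
  by congr (_ * _); field; exact: lt0r_neq0.
by rewrite ler_pdivlMl // mulrC.
Qed.

Lemma perm_map_pair (T : finType) (i j i' j' : T) : i != j -> i' != j' ->
  exists s : {perm T}, s i' = i /\ s j' = j.
Proof.
move=> ij ij'; pose s1 := tperm i' i; pose j1 := s1 j'.
have j1i : j1 != i.
  by rewrite /j1 -[X in _ != X](tpermL i' i) -/s1 (inj_eq (@perm_inj _ s1)) eq_sym.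
exists (s1 * tperm j1 j)%g; rewrite !permM tpermL; split; last exact: tpermL.
by rewrite tpermD // eq_sym.
Qed.

Lemma sum_perm_pair_const (T : finType) (V : nmodType) (f : T -> T -> V)
    (i j i' j' : T) : i != j -> i' != j' ->
  \sum_(s : {perm T}) f (s i) (s j) = \sum_(s : {perm T}) f (s i') (s j').
Proof.
move=> ij ij'; have [s [si sj]] := perm_map_pair ij ij'.
rewrite [RHS](reindex_inj (mulgI s)); apply: eq_bigr => r _.
by rewrite !permM si sj.
Qed.

Lemma sum_offdiag_const (R : pzRingType) N (c : R) :
  \sum_(i < N) \sum_(j < N) (i != j)%:R * c = (N%:R * (N%:R - 1)) * c.
Proof.
have row (i : 'I_N) : \sum_(j < N) (i != j)%:R * c = (N%:R - 1) * c.
  rewrite -mulr_suml; congr (_ * _).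
  rewrite (eq_bigr (fun j => 1 - (i == j)%:R)); last first.
    by move=> j _; case: (i == j); rewrite ?subr0 ?subrr.
  rewrite sumrB sumr_const card_ord (bigD1 i) //= eqxx big1 ?addr0 //.
  by move=> j /negbTE; rewrite eq_sym => ->.
under eq_bigr do rewrite row.
by rewrite sumr_const card_ord -mulrA mulr_natl.
Qed.

(* From expR (- y) >= 1 - y, since (1 - y) (1 + y + 2 y^2) = 1 + y^2 (1 - 2 y). *)
Lemma expR_le_quadratic (R : realType) (y : R) : y <= 2^-1 ->
  expR y <= 1 + y + 2 * y ^+ 2.
Proof.
move=> y_le.
have := expR_ge1Dx (- y); have := expRxMexpNx_1 y; have := expR_gt0 y.
have : 0 <= y ^+ 2 * (1 - 2 * y) by apply: mulr_ge0; [exact: sqr_ge0 | lra].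
nra.
Qed.

Lemma exprn_1Dx_le_expR (R : realType) (y : R) k : 0 <= 1 + y ->
  (1 + y) ^+ k <= expR (k%:R * y).
Proof.
move=> y_ge; rewrite expRM_natl; apply: lerXn2r; rewrite ?nnegrE ?expR_ge0 //.
exact: expR_ge1Dx.
Qed.

Lemma dev_le_expR (R : realType) (y s t delta : R) : 0 < s -> 0 <= t ->
  ~~ (`|y / s - 1| <= delta) ->
  1 <= expR (- (t * s) - t * s * delta) * expR (t * y) +
       expR (t * s - t * s * delta) * expR (- (t * y)).
Proof.
move=> s_gt0 t_ge0; rewrite -ltNge ltr_normr -!expRD => /orP[] dev.
- have : s * (1 + delta) < y by rewrite mulrC -ltr_pdivlMr //; lra.
  have := expR_ge1Dx (- (t * s) - t * s * delta + t * y).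
  have := expR_ge0 (t * s - t * s * delta + - (t * y)); nra.
- have : y < s * (1 - delta) by rewrite mulrC -ltr_pdivrMr //; lra.
  have := expR_ge1Dx (t * s - t * s * delta + - (t * y)).
  have := expR_ge0 (- (t * s) - t * s * delta + t * y); nra.
Qed.

Section Collisions.
Variables (R : realType) (U : finType) (q : U -> R) (n : nat) (h : U -> 'I_n) (N : nat).
Hypotheses (q_ge0 : forall u, 0 <= q u) (q_sum1 : \sum_(u : U) q u = 1).
Local Notation X := {ffun 'I_N -> U}.

Definition coll (x : X) (i j : 'I_N) : R := (h (x i) == h (x j))%:R.

Definition collisions (x : X) : R :=
  \sum_(i < N) \sum_(j < N) (i != j)%:R * coll x i j.

Lemma coll_sum x i j :
  coll x i j = \sum_(t < n) (h (x i) == t)%:R * (h (x j) == t)%:R.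
Proof.
rewrite /coll (bigD1 (h (x i))) //= eqxx mul1r big1 ?addr0; first by rewrite eq_sym.
by move=> t /negbTE ht; rewrite eq_sym ht mul0r.
Qed.

Lemma expect_coll i j : i != j -> expect q (fun x => coll x i j) = normp2 q h.
Proof.
move=> ij; rewrite (eq_expect q (fun x => coll_sum x i j)) expect_sum.
apply: eq_bigr => t _.
rewrite (expect_indep q_sum1 (A := [set i])).
- by rewrite !(expect_marginal q_sum1 _ (fun u => (h u == t)%:R)) -pmassE expr2.
- by move=> x y xy; rewrite xy ?inE.
- by move=> x y xy; rewrite xy // inE eq_sym.
Qed.

Lemma expR_coll mu x i j : expR (mu * coll x i j) = 1 + (expR mu - 1) * coll x i j.
Proof. by rewrite /coll; case: (h (x i) == h (x j)); rewrite ?mulr1 ?mulr0 ?expR0; ring. Qed.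

(* The last pair is disjoint from the earlier ones, so it splits off independently. *)
Lemma expect_expR_pairs (a b : nat -> 'I_N) mu k :
  (forall r, (r < k)%N -> val (a r) = (2 * r)%N /\ val (b r) = (2 * r).+1) ->
  expect q (fun x => expR (mu * \sum_(r < k) coll x (a r) (b r))) =
  (1 + (expR mu - 1) * normp2 q h) ^+ k.
Proof.
elim: k => [|k IHk] ab.
  rewrite expr0 -(expect1 N q_sum1); apply: eq_expect => x.
  by rewrite big_ord0 mulr0 expR0.
have [ak bk] := ab k (ltnSn k).
rewrite (@eq_expect _ _ q _ _ (fun x => expR (mu * \sum_(r < k) coll x (a r) (b r)) *
                                  expR (mu * coll x (a k) (b k)))); last first.
  by move=> x; rewrite big_ord_recr mulrDr expRD.
rewrite (expect_indep q_sum1 (A := [set i : 'I_N | (val i < 2 * k)%N])).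
- rewrite exprS mulrC IHk; last by move=> r rk; apply: ab; exact: ltnW.
  rewrite (eq_expect q (fun x => expR_coll mu x (a k) (b k))) expectD (expect1 _ q_sum1) expectMl.
  by rewrite expect_coll // -val_eqE ak bk /= ; lia.
- move=> x y xy; congr (expR (mu * _)); apply: eq_bigr => r _.
  have [ar br] := ab r (leqW (ltn_ord r)).
  by rewrite /coll !xy // inE ?ar ?br; have := ltn_ord r; lia.
- by move=> x y xy; rewrite /coll !xy // inE ?ak ?bk; lia.
Qed.

Lemma kcount_sum (x : X) t :
  (kcount h x t)%:R = \sum_(j < N) (h (x j) == t)%:R :> R.
Proof.
rewrite /kcount -sum1_card natr_sum big_mkcond /=; apply: eq_bigr => j _.
by rewrite inE; case: (h (x j) == t).
Qed.

Lemma collisions_kcount x :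
  collisions x = \sum_(t < n) (kcount h x t)%:R * ((kcount h x t)%:R - 1).
Proof.
have offdiag : collisions x = \sum_(i < N) \sum_(j < N) coll x i j - \sum_(i < N) 1.
  rewrite /collisions -sumrB; apply: eq_bigr => i _.
  rewrite [in RHS](bigD1 i) //= [in LHS](bigD1 i) //= eqxx mul0r add0r /coll eqxx.
  rewrite addrC addrK; apply: eq_bigr => j ji.
  by rewrite eq_sym ji mul1r.
have all_pairs : \sum_(i < N) \sum_(j < N) coll x i j = \sum_(t < n) (kcount h x t)%:R ^+ 2.
  under eq_bigr do under eq_bigr do rewrite coll_sum.
  under eq_bigr do rewrite exchange_big; rewrite exchange_big /=.
  by apply: eq_bigr => t _; rewrite expr2 !kcount_sum big_distrlr.
have diag : \sum_(i < N) 1 = \sum_(t < n) (kcount h x t)%:R :> R.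
  under [RHS]eq_bigr do rewrite kcount_sum; rewrite exchange_big /=.
  apply: eq_bigr => j _; rewrite (bigD1 (h (x j))) //= eqxx big1 ?addr0 //.
  by move=> t /negbTE; rewrite eq_sym => ->.
rewrite offdiag all_pairs diag -sumrB; apply: eq_bigr => t _; ring.
Qed.

Lemma sum_perm_coll x i j : i != j ->
  \sum_(s : {perm 'I_N}) coll x (s i) (s j) =
  #|{perm 'I_N}|%:R * collisions x / (N%:R * (N%:R - 1)).
Proof.
move=> ij; have N_gt1 : (1 < N)%N.
  by move: ij (ltn_ord i) (ltn_ord j); rewrite -val_eqE /=; lia.
have NN : N%:R * (N%:R - 1) != 0 :> R.
  by rewrite mulf_neq0 // ?subr_eq0 ?pnatr_eq0 ?pnatr_eq1; lia.
apply: (mulfI NN); rewrite [RHS]mulrC divfK // -sum_offdiag_const.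
transitivity (\sum_(s : {perm 'I_N}) \sum_(i' < N) \sum_(j' < N)
                (i' != j')%:R * coll x (s i') (s j')).
  rewrite [RHS]exchange_big; apply: eq_bigr => i' _.
  rewrite [RHS]exchange_big; apply: eq_bigr => j' _; rewrite -mulr_sumr.
  have [<-|ij'] := eqVneq i' j'; first by rewrite /= !mul0r.
  by rewrite (sum_perm_pair_const _ ij ij').
rewrite mulr_natl -sumr_const; apply: eq_bigr => s _.
rewrite /collisions [RHS](reindex_inj (@perm_inj _ s)); apply: eq_bigr => i' _.
rewrite [RHS](reindex_inj (@perm_inj _ s)); apply: eq_bigr => j' _.
by rewrite (inj_eq (@perm_inj _ s)).
Qed.

Lemma sum_perm_pairs_coll (a b : nat -> 'I_N) k x :
  (forall r, (r < k)%N -> a r != b r) ->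
  \sum_(s : {perm 'I_N}) \sum_(r < k) coll x (s (a r)) (s (b r)) =
  k%:R * (#|{perm 'I_N}|%:R * collisions x / (N%:R * (N%:R - 1))).
Proof.
move=> ab; rewrite exchange_big /=.
rewrite (eq_bigr _ (fun (r : 'I_k) _ => sum_perm_coll x (ab r (ltn_ord r)))).
by rewrite sumr_const card_ord [RHS]mulr_natl.
Qed.

Lemma expect_expR_collisions_le k mu : (0 < k)%N -> (2 * k <= N)%N ->
  expect q (fun x => expR (mu * k%:R * (collisions x / (N%:R * (N%:R - 1)))))
  <= (1 + (expR mu - 1) * normp2 q h) ^+ k.
Proof.
move=> k_gt0 kN; have N_gt0 : (0 < N)%N by lia.
pose a r := insubd (Ordinal N_gt0) (2 * r); pose b r := insubd (Ordinal N_gt0) (2 * r).+1.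
have ab r : (r < k)%N -> val (a r) = (2 * r)%N /\ val (b r) = (2 * r).+1.
  by move=> rk; rewrite !val_insubd !ifT //; lia.
have ab_neq r : (r < k)%N -> a r != b r.
  by move=> /ab[ar br]; rewrite -val_eqE ar br ltn_eqF.
set P := #|{perm 'I_N}|.
have P_gt0 : (0 < P)%N by rewrite /P card_Sn fact_gt0.
have avg x : mu * k%:R * (collisions x / (N%:R * (N%:R - 1))) =
    P%:R^-1 * \sum_(s : {perm 'I_N}) (mu * \sum_(r < k) coll x (s (a r)) (s (b r))).
  rewrite -mulr_sumr sum_perm_pairs_coll // -/P; field.
  by rewrite subr_eq0 pnatr_eq1 !pnatr_eq0; apply/and3P; split; lia.
apply: (@le_trans _ _ (expect q (fun x => P%:R^-1 *
    \sum_(s : {perm 'I_N}) expR (mu * \sum_(r < k) coll x (s (a r)) (s (b r)))))).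
  by apply: (ler_expect q_ge0) => x; rewrite avg; exact: expR_mean_le.
have perm_pairs (s : {perm 'I_N}) :
    expect q (fun x => expR (mu * \sum_(r < k) coll x (s (a r)) (s (b r)))) =
    (1 + (expR mu - 1) * normp2 q h) ^+ k.
  rewrite -(expect_expR_pairs mu ab) -[RHS](expect_perm q s); apply: eq_expect => x.
  by congr expR; congr (_ * _); apply: eq_bigr => r _; rewrite /coll !ffunE.
rewrite expectMl expect_sum (eq_bigr _ (fun s _ => perm_pairs s)) sumr_const.
by rewrite (_ : #|xpredT| = P) // -[X in _ * X]mulr_natl mulKf // pnatr_eq0 -lt0n P_gt0.
Qed.

Lemma collisions_tail k mu delta : (0 < k)%N -> (2 * k <= N)%N ->
  0 <= mu <= 2^-1 -> 0 < normp2 q h ->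
  1 - 2 * expR (- (k%:R * normp2 q h * (mu * delta - 2 * mu ^+ 2)))
  <= Prob q (fun x : X =>
       `|collisions x / (N%:R * (N%:R - 1)) / normp2 q h - 1| <= delta).
Proof.
move=> k_gt0 kN /andP[mu_ge0 mu_le] s_gt0; set s := normp2 q h in s_gt0 *.
pose Y x := collisions x / (N%:R * (N%:R - 1)).
pose c := mu * k%:R * s * delta.
have tail nu : nu <= 2^-1 -> nu ^+ 2 = mu ^+ 2 ->
    expR (- (nu * k%:R * s) - c) * expect q (fun x => expR (nu * k%:R * Y x))
    <= expR (- (k%:R * s * (mu * delta - 2 * mu ^+ 2))).
  move=> nu_le nu2.
  have base_ge0 : 0 <= 1 + (expR nu - 1) * s.
    have := normp2_le1 h q_ge0 q_sum1; rewrite -/s; have := expR_gt0 nu; nra.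
  apply: (@le_trans _ _ (expR (- (nu * k%:R * s) - c) * expR (k%:R * ((expR nu - 1) * s)))).
    apply: ler_wpM2l; first exact: expR_ge0.
    exact: le_trans (expect_expR_collisions_le nu k_gt0 kN) (exprn_1Dx_le_expR k base_ge0).
  rewrite -expRD ler_expR /c.
  have ks_ge0 : 0 <= k%:R * s by apply: mulr_ge0; [exact: ler0n | exact: ltW].
  have := ler_wpM2l ks_ge0 (expR_le_quadratic nu_le); nra.
pose F x := expR (- (mu * k%:R * s) - c) * expR (mu * k%:R * Y x) +
            expR (- (- mu * k%:R * s) - c) * expR (- mu * k%:R * Y x).
apply: le_trans (Prob_markov q_ge0 q_sum1 (F := F) _ _).
- rewrite /F expectD !expectMl.
  have := tail mu mu_le erefl; have := tail (- mu) ltac:(lra) (sqrrN mu); lra.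
- by move=> x; rewrite /F addr_ge0 // mulr_ge0 // expR_ge0.
- move=> x dev; have := dev_le_expR s_gt0 (mulr_ge0 mu_ge0 (ler0n _ k)) dev.
  by rewrite /F /c !mulNr opprK.
Qed.

End Collisions.

Lemma load_factor_gt1 (R : realType) (n m : nat) (eps : R) : (0 < n)%N ->
  0 < eps -> eps < 3^-1 -> eps ^- 2 < m%:R / n%:R -> (1 < m)%N.
Proof.
move=> n_gt0 eps_gt0 eps_lt hL; rewrite -(ltr_nat R).
have n_ge1 : 1 <= n%:R :> R by rewrite ler1n.
have mE : m%:R = m%:R / n%:R * n%:R :> R by rewrite divfK // pnatr_eq0 -lt0n.
have eps2 : eps ^+ 2 * eps ^- 2 = 1 by rewrite mulfV // expf_neq0 // gt_eqF.
have : 0 < eps ^- 2 by rewrite invr_gt0 exprn_gt0.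
have : eps ^+ 2 < 1 by rewrite expr2; nra.
nra.
Qed.

Lemma load_exponent_ge (R : realType) (n m k : nat) (s eps : R) :
  (0 < n)%N -> (0 < k)%N -> (m <= (2 * k).+1)%N -> 0 < eps ->
  eps ^- 2 < m%:R / n%:R -> 1 <= n%:R * s ->
  m%:R / n%:R * eps ^+ 2 + 1 <= k%:R * s * (847 / 32 * eps ^+ 2).
Proof.
move=> n_gt0 k_gt0 mk eps_gt0 hL ns_ge1.
have n_pos : 0 < n%:R :> R by rewrite ltr0n.
have mE : m%:R = m%:R / n%:R * n%:R :> R by rewrite divfK // gt_eqF.
have eps2 : eps ^+ 2 * eps ^- 2 = 1 by rewrite mulfV // expf_neq0 // gt_eqF.
have e2_gt0 : 0 < eps ^+ 2 by rewrite exprn_gt0.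
have k_ge1 : 1 <= k%:R :> R by rewrite ler1n.
have mk' : m%:R <= 2 * k%:R + 1 :> R by move: mk; rewrite -(ler_nat R) -addn1 natrD natrM.
set L := m%:R / n%:R in mE hL *.
have n_lt : n%:R < eps ^+ 2 * m%:R by rewrite mE; nra.
have kns : eps ^+ 2 * k%:R <= eps ^+ 2 * (k%:R * (n%:R * s)).
  by apply: ler_wpM2l; [exact: ltW | exact: ler_peMr].
rewrite -(ler_pM2l n_pos); nra.
Qed.

Lemma expRN1_le_half (R : realType) : expR (-1) <= 2^-1 :> R.
Proof.
have := expR_ge1Dx (1 : R); have := expRxMexpNx_1 (1 : R); have := expR_gt0 (-1 : R).
nra.
Qed.

Lemma two_expRN_le (R : realType) (a b : R) : a + 1 <= b ->
  2 * expR (- b) <= expR (- a).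
Proof.
move=> ab; have : expR (- b) <= expR (- a) * expR (-1).
  by rewrite -expRD ler_expR; lra.
have := expRN1_le_half R; have := expR_ge0 (- a); nra.
Qed.

Theorem corollary2 (R : realType) (U : finType) (q : U -> R)
  (hq0 : forall u, 0 <= q u) (hq1 : \sum_(u : U) q u = 1)
  (n : nat) (h : U -> 'I_n) (eps : R) (m : nat)
  (hn : (24 < n)%N) (he0 : 0 < eps) (he1 : eps < 3^-1) (hm : (0 < m)%N)
  (hL : eps ^- 2 < m%:R / n%:R) :
  1 - (10 / 9) * expR (- ((m%:R / n%:R) * eps ^+ 2))
  <= Prob q (fun x : {ffun 'I_m -> U} =>
       `| \sum_(i < n)
            ((kcount h x i)%:R * ((kcount h x i)%:R - 1)) / (m%:R * (m%:R - 1))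
            / normp2 q h - 1 | <= 22 * eps).
Proof.
have n_gt0 : (0 < n)%N by lia.
have k_gt0 : (0 < m./2)%N by rewrite half_gt0 (load_factor_gt1 n_gt0 he0 he1 hL).
have km : (2 * m./2 <= m)%N by rewrite mul2n -geq_half_double.
have mk : (m <= (2 * m./2).+1)%N by rewrite mul2n -leq_half_double.
have mu_range : 0 <= 11 / 8 * eps <= 2^-1 by apply/andP; split; lra.
have tail := collisions_tail hq0 hq1 (22 * eps) k_gt0 km mu_range (normp2_gt0 h hq1 n_gt0).
apply: le_trans (le_trans _ tail) _; last first.
  by rewrite [X in _ <= X]/Prob; under eq_bigl => x do rewrite -!mulr_suml -collisions_kcount.
have := load_exponent_ge n_gt0 k_gt0 mk he0 hL (normp2_ge_inv h hq1 n_gt0).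
have -> : 11 / 8 * eps * (22 * eps) - 2 * (11 / 8 * eps) ^+ 2 = 847 / 32 * eps ^+ 2.
  by field.
move/two_expRN_le; have := expR_ge0 (- (m%:R / n%:R * eps ^+ 2)); lra.
Qed.
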